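(* Let $f$ be a homeomorphism of a compact manifold $M$ whose non-wandering set is all of $M$. Let $M_1\to M$ be a finite cover and let $g:M_1\to M_1$ be a lift of an iterate $f^k$ ($k\ge1$) of $f$. Then the non-wandering set of $g$ is all of $M_1$.
   Context: The non-wandering set of a homeomorphism $\phi$ of $X$ is the set of $x$ such that for every neighbourhood $U$ of $x$ there is $n>0$ with $\phi^n(U)\cap U\neq\emptyset$. *)

From Stdlib Require Import Reals List.
From Stdlib Require Fin.
Open Scope R_scope.

Definition is_topology {X : Type} (op : (X -> Prop) -> Prop) : Prop :=
  op (fun _ => True) /\ op (fun _ => False) /\
  (forall U V, op U -> op V -> op (fun x => U x /\ V x)) /\
  (forall F : (X -> Prop) -> Prop, (forall U, F U -> op U) ->
      op (fun x => exists U, F U /\ U x)).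

Definition continuous {X Y : Type} (opX : (X -> Prop) -> Prop) (opY : (Y -> Prop) -> Prop)
  (f : X -> Y) : Prop :=
  forall W, opY W -> opX (fun x => W (f x)).

(* continuity of f restricted to the subspace A (subspace topology) *)
Definition continuous_on {X Y : Type} (opX : (X -> Prop) -> Prop) (opY : (Y -> Prop) -> Prop)
  (A : X -> Prop) (f : X -> Y) : Prop :=
  forall W, opY W -> exists O, opX O /\ forall x, A x -> (O x <-> W (f x)).

Definition homeomorphism {X Y : Type} (opX : (X -> Prop) -> Prop) (opY : (Y -> Prop) -> Prop)
  (f : X -> Y) : Prop :=
  exists h : Y -> X, (forall x, h (f x) = x) /\ (forall y, f (h y) = y) /\
    continuous opX opY f /\ continuous opY opX h.

Definition compact {X : Type} (op : (X -> Prop) -> Prop) : Prop :=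
  forall F : (X -> Prop) -> Prop, (forall U, F U -> op U) ->
    (forall x, exists U, F U /\ U x) ->
    exists l : list (X -> Prop), (forall U, In U l -> F U) /\
       (forall x, exists U, In U l /\ U x).

Definition hausdorff {X : Type} (op : (X -> Prop) -> Prop) : Prop :=
  forall x y, x <> y -> exists U V, op U /\ op V /\ U x /\ V y /\
    (forall z, U z -> V z -> False).

Definition second_countable {X : Type} (op : (X -> Prop) -> Prop) : Prop :=
  exists B : nat -> X -> Prop, (forall i, op (B i)) /\
    forall U, op U -> forall x, U x -> exists i, B i x /\ (forall z, B i z -> U z).

Definition Rn (n : nat) : Type := Fin.t n -> R.

Definition Rn_open (n : nat) (U : Rn n -> Prop) : Prop :=
  forall x, U x -> exists eps, 0 < eps /\
    forall y : Rn n, (forall i, Rabs (y i - x i) < eps) -> U y.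

Definition locally_euclidean {X : Type} (op : (X -> Prop) -> Prop) (n : nat) : Prop :=
  forall x, exists (U : X -> Prop) (V : Rn n -> Prop) (phi : X -> Rn n) (psi : Rn n -> X),
    op U /\ U x /\ Rn_open n V /\
    (forall z, U z -> V (phi z) /\ psi (phi z) = z) /\
    (forall v, V v -> U (psi v) /\ phi (psi v) = v) /\
    continuous_on op (Rn_open n) U phi /\
    continuous_on (Rn_open n) op V psi.

Definition compact_manifold {X : Type} (op : (X -> Prop) -> Prop) : Prop :=
  hausdorff op /\ second_countable op /\ (exists n, locally_euclidean op n) /\ compact op.

Definition finite_covering {Y X : Type} (opY : (Y -> Prop) -> Prop) (opX : (X -> Prop) -> Prop)
  (p : Y -> X) : Prop :=
  continuous opY opX p /\ (forall x, exists y, p y = x) /\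
  forall x, exists (U : X -> Prop) (sheets : list (Y -> Prop)),
    opX U /\ U x /\
    (forall V, In V sheets -> opY V) /\
    (forall y, U (p y) <-> exists V, In V sheets /\ V y) /\
    (forall i j y, (i < length sheets)%nat -> (j < length sheets)%nat ->
        nth i sheets (fun _ => False) y -> nth j sheets (fun _ => False) y -> i = j) /\
    (forall V, In V sheets -> exists s : X -> Y,
        (forall y, V y -> s (p y) = y) /\
        (forall z, U z -> V (s z) /\ p (s z) = z) /\
        continuous_on opX opY U s).

Definition nonwandering_everywhere {X : Type} (op : (X -> Prop) -> Prop) (phi : X -> X) : Prop :=
  forall x (U : X -> Prop), op U -> U x ->
    exists (n : nat) (y : X), (0 < n)%nat /\ U y /\ U (Nat.iter n phi y).

(** A point of a non-wandering system returns to any neighbourhood arbitrarily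
    often, and by pigeonhole two return times of f agree modulo k, so f^k is
    non-wandering as well.  To lift to the cover, take an evenly covered
    neighbourhood of the base point and let z return to it d+1 times under f^k,
    d being the number of sheets.  At each return the d lifts of z lie in d
    distinct sheets (g is injective), so one of them lies in the sheet of the
    given point; by pigeonhole the same lift does so at two return times, which
    gives a return of g. *)

From Stdlib Require Import Reals List.
From Stdlib Require Import Classical IndefiniteDescription FinFun Lia.

Open Scope nat_scope.

Lemma pigeonhole (d : nat) (R : nat -> nat -> Prop) :
  (forall j, j <= d -> exists c, c < d /\ R j c) ->
  exists i j c, i < j <= d /\ c < d /\ R i c /\ R j c.
Proof.
  intros HR.
  destruct (functional_choice (fun j c => j <= d -> c < d /\ R j c)) as [F HF].
  { intros j. destruct (Nat.le_gt_cases j d) as [Hj | Hj].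
    - destruct (HR j Hj) as [c Hc]. now exists c.
    - exists 0. lia. }
  apply NNPP. intros Hno.
  assert (Hfun : bFun d F) by (intros c Hc; apply HF; lia).
  assert (Hinj : bInjective d F).
  { intros a b Ha Hb E.
    destruct (HF a ltac:(lia)) as [Fa Ra], (HF b ltac:(lia)) as [Fb Rb].
    destruct (Nat.lt_total a b) as [Hab | [Hab | Hab]]; [| exact Hab |];
      exfalso; apply Hno.
    - exists a, b, (F a). rewrite E in *. repeat split; auto; lia.
    - exists b, a, (F b). rewrite E in *. repeat split; auto; lia. }
  destruct (HF d (le_n d)) as [Fd Rd].
  destruct (proj1 (bInjective_bSurjective Hfun) Hinj (F d) Fd) as [c [Hc E]].
  destruct (HF c ltac:(lia)) as [_ Rc].
  apply Hno. exists c, d, (F d). rewrite E in Rc. repeat split; auto.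
Qed.

Lemma family_meets_every_set (A : Type) (d : nat) (pts : nat -> A)
    (V : nat -> A -> Prop) :
  (forall c, c < d -> exists i, i < d /\ V i (pts c)) ->
  (forall i c c', i < d -> c < d -> c' < d -> V i (pts c) -> V i (pts c') -> c = c') ->
  forall i, i < d -> exists c, c < d /\ V i (pts c).
Proof.
  intros Hmeet Honce.
  destruct (functional_choice (fun c i => c < d -> i < d /\ V i (pts c))) as [F HF].
  { intros c. destruct (Nat.lt_ge_cases c d) as [Hc | Hc].
    - destruct (Hmeet c Hc) as [i Hi]. now exists i.
    - exists 0. lia. }
  assert (Hfun : bFun d F) by (intros c Hc; apply HF, Hc).
  assert (Hinj : bInjective d F).
  { intros c c' Hc Hc' E.
    apply (Honce (F c)); auto; [apply HF, Hc | rewrite E; apply HF, Hc']. }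
  intros i Hi.
  destruct (proj1 (bInjective_bSurjective Hfun) Hinj i Hi) as [c [Hc <-]].
  exists c. split; [exact Hc | apply HF, Hc].
Qed.

Lemma iter_continuous {X : Type} (op : (X -> Prop) -> Prop) (phi : X -> X) :
  continuous op op phi -> forall n, continuous op op (Nat.iter n phi).
Proof.
  intros Hc n. induction n as [| n IH]; intros W HW; simpl.
  - exact HW.
  - apply (IH (fun y => W (phi y))), Hc, HW.
Qed.

Lemma iter_injective {X : Type} (phi : X -> X) :
  (forall x y, phi x = phi y -> x = y) ->
  forall n x y, Nat.iter n phi x = Nat.iter n phi y -> x = y.
Proof.
  intros Hinj n. induction n as [| n IH]; intros x y E; [exact E |].
  apply IH, Hinj, E.
Qed.

Lemma iter_iter {X : Type} (phi : X -> X) (k q : nat) (x : X) :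
  Nat.iter q (Nat.iter k phi) x = Nat.iter (q * k) phi x.
Proof.
  induction q as [| q IH]; [reflexivity |].
  simpl Nat.iter at 1. rewrite IH, <- Nat.iter_add. reflexivity.
Qed.

Lemma nonwandering_returns {X : Type} (op : (X -> Prop) -> Prop) (phi : X -> X) :
  is_topology op -> continuous op op phi -> nonwandering_everywhere op phi ->
  forall N U x, op U -> U x ->
  exists z (S : nat -> nat), U z /\ (forall i j, i < j -> S i < S j) /\
    forall j, j <= N -> U (Nat.iter (S j) phi z).
Proof.
  intros [_ [_ [Hinter _]]] Hc Hnw N.
  induction N as [| N IH]; intros U x HU Ux.
  - exists x, (fun j => j). repeat split; auto.
    intros j Hj. replace j with 0 by lia. exact Ux.
  - destruct (Hnw x U HU Ux) as [n [y [Hn [Uy Uny]]]].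
    (* the [N] returns to [U] inside [U ∩ phi^-n U] give, together with [z]
       itself, [N+1] returns to [U] *)
    destruct (IH (fun w => U w /\ U (Nat.iter n phi w)) y) as
        [z [S [[Uz _] [Sinc Sret]]]];
      [apply Hinter; [exact HU | apply iter_continuous; assumption] | now split |].
    exists z, (fun j => match j with 0 => 0 | Datatypes.S j => n + S j end).
    split; [exact Uz | split].
    + intros [| i] [| j] Hij; try lia. specialize (Sinc i j). lia.
    + intros [| j] Hj; [exact Uz |].
      rewrite Nat.iter_add. apply Sret. lia.
Qed.

Lemma nonwandering_iter {X : Type} (op : (X -> Prop) -> Prop) (phi : X -> X) (k : nat) :
  is_topology op -> continuous op op phi -> nonwandering_everywhere op phi ->
  1 <= k -> nonwandering_everywhere op (Nat.iter k phi).
Proof.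
  intros Htop Hc Hnw Hk x U HU Ux.
  destruct (nonwandering_returns op phi Htop Hc Hnw k U x HU Ux)
    as [z [S [_ [Sinc Sret]]]].
  destruct (pigeonhole k (fun j c => S j mod k = c)) as [i [j [c [Hij [_ [Ei Ej]]]]]].
  { intros j _. exists (S j mod k). split; [apply Nat.mod_upper_bound; lia | reflexivity]. }
  pose proof (Nat.div_mod (S i) k ltac:(lia)) as Di.
  pose proof (Nat.div_mod (S j) k ltac:(lia)) as Dj.
  pose proof (Sinc i j (proj1 Hij)).
  assert (S i / k < S j / k) by nia.
  exists (S j / k - S i / k), (Nat.iter (S i) phi z). split; [lia | split].
  - apply Sret. lia.
  - rewrite iter_iter, <- Nat.iter_add.
    replace ((S j / k - S i / k) * k + S i) with (S j) by nia.
    apply Sret. lia.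
Qed.

Definition evenly_covered {Y X : Type} (p : Y -> X) (U : X -> Prop) (d : nat)
    (V : nat -> Y -> Prop) (s : nat -> X -> Y) : Prop :=
  (forall y, U (p y) -> exists c, c < d /\ V c y) /\
  (forall c c' y, c < d -> c' < d -> V c y -> V c' y -> c = c') /\
  (forall c, c < d ->
     (forall y, V c y -> s c (p y) = y) /\
     (forall z, U z -> V c (s c z) /\ p (s c z) = z)).

Lemma finite_covering_evenly_covered {Y X : Type} (opY : (Y -> Prop) -> Prop)
    (opX : (X -> Prop) -> Prop) (p : Y -> X) :
  finite_covering opY opX p ->
  forall y, exists U d V s, opX U /\ U (p y) /\
    (forall c, c < d -> continuous_on opX opY U (s c)) /\ evenly_covered p U d V s.
Proof.
  intros [_ [_ Hloc]] x.
  destruct (Hloc (p x)) as [U [L [HU [Ux [_ [Hcover [Hdisj Hsec]]]]]]].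
  set (V := fun c => nth c L (fun _ => False)).
  destruct (functional_choice (fun c s => c < length L ->
      ((forall y, V c y -> s (p y) = y) /\
       (forall z, U z -> V c (s z) /\ p (s z) = z)) /\
      continuous_on opX opY U s)) as [s Hs].
  { intros c. destruct (Nat.lt_ge_cases c (length L)) as [Hc | Hc].
    - destruct (Hsec (V c) (nth_In L _ Hc)) as [s [Hs1 [Hs2 Hs3]]].
      exists s. auto.
    - exists (fun _ => x). lia. }
  exists U, (length L), V, s. split; [exact HU | split; [exact Ux | split]].
  { intros c Hc. apply Hs, Hc. }
  split; [| split; [exact Hdisj | intros c Hc; apply Hs, Hc]].
  intros y Uy. destruct (proj1 (Hcover y) Uy) as [W [HW Wy]].
  destruct (In_nth L W (fun _ => False) HW) as [c [Hc E]].
  exists c. unfold V. rewrite E. auto.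
Qed.

Lemma section_preimage_nbhd {Y X : Type} (opY : (Y -> Prop) -> Prop)
    (opX : (X -> Prop) -> Prop) (p : Y -> X) (s : X -> Y) (U : X -> Prop)
    (V W : Y -> Prop) (x : Y) :
  is_topology opX -> opX U -> continuous_on opX opY U s -> opY W ->
  (forall y, V y -> s (p y) = y) -> V x -> U (p x) -> W x ->
  exists Q, opX Q /\ Q (p x) /\ (forall z, Q z -> U z) /\
    (forall y, V y -> Q (p y) -> W y).
Proof.
  intros [_ [_ [Hinter _]]] HU Hs HW Hsp Vx Upx Wx.
  destruct (Hs W HW) as [O [HO EO]].
  exists (fun z => U z /\ O z). repeat split.
  - apply Hinter; assumption.
  - exact Upx.
  - apply EO; [exact Upx |]. rewrite Hsp; assumption.
  - intros z [Uz _]. exact Uz.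
  - intros y Vy [Uy Oy]. rewrite <- (Hsp y Vy). apply EO; assumption.
Qed.

Section LiftsOverEvenlyCovered.

Variables (Y X : Type) (p : Y -> X) (g : Y -> Y) (h : X -> X).
Hypothesis g_injective : forall y y', g y = g y' -> y = y'.
Hypothesis p_semiconj : forall y, p (g y) = h (p y).
Variables (U : X -> Prop) (d : nat) (V : nat -> Y -> Prop) (s : nat -> X -> Y).
Hypothesis U_evenly_covered : evenly_covered p U d V s.

Lemma p_iter_section (n c : nat) (z : X) :
  c < d -> U z -> p (Nat.iter n g (s c z)) = Nat.iter n h z.
Proof.
  intros Hc Uz.
  rewrite (Nat.iter_swap_gen _ _ p g h p_semiconj).
  destruct U_evenly_covered as [_ [_ Hsec]].
  rewrite (proj2 (proj2 (Hsec c Hc) z Uz)). reflexivity.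
Qed.

Lemma lifts_meet_every_sheet (n : nat) (z : X) :
  U z -> U (Nat.iter n h z) ->
  forall i, i < d -> exists c, c < d /\ V i (Nat.iter n g (s c z)).
Proof.
  intros Uz Uhz.
  pose proof U_evenly_covered as [Hcover [Hdisj Hsec]].
  apply family_meets_every_set.
  - intros c Hc. apply Hcover. rewrite p_iter_section; assumption.
  - intros i c c' Hi Hc Hc' Vc Vc'.
    assert (E : Nat.iter n g (s c z) = Nat.iter n g (s c' z)).
    { rewrite <- (proj1 (Hsec i Hi) _ Vc), <- (proj1 (Hsec i Hi) _ Vc').
      rewrite !p_iter_section by assumption. reflexivity. }
    apply iter_injective in E; [| exact g_injective].
    apply (Hdisj c c' (s c z) Hc Hc').
    + apply (Hsec c Hc), Uz.
    + rewrite E. apply (Hsec c' Hc'), Uz.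
Qed.

End LiftsOverEvenlyCovered.

Lemma nonwandering_lift {Y X : Type} (opY : (Y -> Prop) -> Prop)
    (opX : (X -> Prop) -> Prop) (p : Y -> X) (g : Y -> Y) (h : X -> X) :
  is_topology opX -> finite_covering opY opX p ->
  (forall y y', g y = g y' -> y = y') -> (forall y, p (g y) = h (p y)) ->
  continuous opX opX h -> nonwandering_everywhere opX h ->
  nonwandering_everywhere opY g.
Proof.
  intros Htop Hcov Hinj Hsemi hc Hnw x W HW Wx.
  destruct (finite_covering_evenly_covered opY opX p Hcov x)
    as [U [d [V [s [HU [Upx [Hs Hev]]]]]]].
  pose proof Hev as [Hcover [_ Hsec]].
  destruct (Hcover x Upx) as [c0 [Hc0 Vx]].
  destruct (section_preimage_nbhd opY opX p (s c0) U (V c0) W x Htop HU (Hs c0 Hc0) HW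
              (proj1 (Hsec c0 Hc0)) Vx Upx Wx) as [Q [HQ [Qpx [QU QW]]]].
  destruct (nonwandering_returns opX h Htop hc Hnw d Q (p x) HQ Qpx)
    as [z [S [Qz [Sinc Sret]]]].
  destruct (pigeonhole d (fun j c => V c0 (Nat.iter (S j) g (s c z))))
    as [i [j [c [Hij [Hc [Vi Vj]]]]]].
  { intros j Hj. apply (lifts_meet_every_sheet Y X p g h Hinj Hsemi U d V s Hev);
      auto. }
  pose proof (Sinc i j (proj1 Hij)).
  exists (S j - S i), (Nat.iter (S i) g (s c z)). split; [lia | split].
  - apply QW; [exact Vi |].
    rewrite (p_iter_section Y X p g h Hsemi U d V s Hev) by auto. apply Sret. lia.
  - rewrite <- Nat.iter_add, Nat.sub_add by lia.
    apply QW; [exact Vj |].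
    rewrite (p_iter_section Y X p g h Hsemi U d V s Hev) by auto. apply Sret. lia.
Qed.

Close Scope nat_scope.

Theorem mainTheorem11
  (M : Type) (opM : (M -> Prop) -> Prop)
  (M1 : Type) (opM1 : (M1 -> Prop) -> Prop)
  (f : M -> M) (p : M1 -> M) (g : M1 -> M1) (k : nat) :
  is_topology opM -> is_topology opM1 ->
  compact_manifold opM ->
  homeomorphism opM opM f ->
  nonwandering_everywhere opM f ->
  finite_covering opM1 opM p ->
  (1 <= k)%nat ->
  homeomorphism opM1 opM1 g ->
  (forall y, p (g y) = Nat.iter k f (p y)) ->
  nonwandering_everywhere opM1 g.
Proof.
  intros TM _ _ [_ [_ [_ [fc _]]]] Hnw Hcov Hk [gi [giK _]] Hsemi.
  apply (nonwandering_lift opM1 opM p g (Nat.iter k f)); auto.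
  - intros y y' E. rewrite <- (giK y), E, giK. reflexivity.
  - apply iter_continuous, fc.
  - apply nonwandering_iter; assumption.
Qed.
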